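(* Consider the TVFJ dynamics described in the context. For every $t\in\mathbb N$, $t\ge1$, the matrix \[ \Sigma[t]:=\sum_{\tau=0}^{t-1}\Phi(t,\tau+1)\,(I-\Lambda[\tau]) \] is row-substochastic, i.e., it has entries in $[0,1]$ and each of its row sums is at most $1$.
   Context: There are $n$ agents with opinions $\mathbf x[t]\in\mathbb R^n$ and innate opinions $\mathbf s\in[0,1]^n$, evolving by $\mathbf x[t+1]=\Lambda[t]W[t]\mathbf x[t]+(I-\Lambda[t])\mathbf s$, where $W[t]\in\mathbb R^{n\times n}$ is row-stochastic (nonnegative entries, rows summing to 1) and $\Lambda[t]=\mathrm{diag}(\lambda_1[t],\dots,\lambda_n[t])$ with $\lambda_i[t]\in[0,1]$. The state transition matrix is $\Phi(t,\tau)=\Lambda[t-1]W[t-1]\cdots\Lambda[\tau]W[\tau]$ for $t>\tau$ and $\Phi(\tau,\tau)=I$. *)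

From HB Require Import structures.
From mathcomp Require Import all_boot all_order all_algebra.
Set Implicit Arguments. Unset Strict Implicit. Unset Printing Implicit Defensive.
Import Order.TTheory GRing.Theory Num.Theory.
Local Open Scope ring_scope.

Definition row_stochastic (R : realFieldType) (n : nat) (A : 'M[R]_n) : Prop :=
  (forall i j, 0 <= A i j) /\ (forall i, \sum_j A i j = 1).

Definition row_substochastic (R : realFieldType) (n : nat) (A : 'M[R]_n) : Prop :=
  (forall i j, 0 <= A i j <= 1) /\ (forall i, \sum_j A i j <= 1).

Definition Lam (R : realFieldType) (n : nat) (lam : nat -> 'I_n -> R) (t : nat)
  : 'M[R]_n := diag_mx (\row_i lam t i).

(* State transition matrix:
   Phi(t,tau) = Lambda[t-1] W[t-1] ... Lambda[tau] W[tau] for t > tau,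
   Phi(tau,tau) = I  (and, by convention, I for t < tau, never used). *)
Fixpoint Phi (R : realFieldType) (n : nat) (W : nat -> 'M[R]_n)
  (lam : nat -> 'I_n -> R) (t tau : nat) {struct t} : 'M[R]_n :=
  match t with
  | 0 => 1%:M
  | t'.+1 => if (tau <= t')%N
             then (Lam lam t' *m W t') *m Phi W lam t' tau
             else 1%:M
  end.

Definition Sigma (R : realFieldType) (n : nat) (W : nat -> 'M[R]_n)
  (lam : nat -> 'I_n -> R) (t : nat) : 'M[R]_n :=
  \sum_(0 <= tau < t) Phi W lam t tau.+1 *m (1%:M - Lam lam tau).

From HB Require Import structures.
From mathcomp Require Import all_boot all_order all_algebra.
Import Order.TTheory GRing.Theory Num.Theory.
Local Open Scope ring_scope.

(* Sigma obeys the affine recursion Sigma[t+1] = Lambda[t] W[t] Sigma[t] + (I - Lambda[t])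
   with Sigma[0] = 0. Nonnegative matrices with row sums at most 1 are closed under
   products, and row by row Lambda W Sigma + (I - Lambda) is a convex combination of a
   row of W Sigma and a row of the identity; so by induction every Sigma[t] is
   nonnegative with row sums at most 1, and entries of such a matrix are at most 1. *)

Section Substochastic.

Context {R : numDomainType}.

Definition substochastic {m n : nat} (A : 'M[R]_(m, n)) : Prop :=
  (forall i j, 0 <= A i j) /\ (forall i, \sum_j A i j <= 1).

Lemma substochastic0 (m n : nat) : substochastic (0 : 'M[R]_(m, n)).
Proof.
split=> [i j|i]; first by rewrite mxE.
by rewrite big1 ?ler01 // => j _; rewrite mxE.
Qed.

Lemma row_sum_mulmx (m n p : nat) (A : 'M[R]_(m, n)) (B : 'M[R]_(n, p)) i :
  \sum_j (A *m B) i j = \sum_k A i k * \sum_j B k j.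
Proof.
under eq_bigr => j _ do rewrite mxE.
by rewrite exchange_big; apply: eq_bigr => k _; rewrite big_distrr.
Qed.

Lemma substochastic_mul (m n p : nat) (A : 'M[R]_(m, n)) (B : 'M[R]_(n, p)) :
  substochastic A -> substochastic B -> substochastic (A *m B).
Proof.
move=> [A_ge0 A_le1] [B_ge0 B_le1]; split=> [i j|i].
  by rewrite mxE sumr_ge0 // => k _; rewrite mulr_ge0.
rewrite row_sum_mulmx; apply: le_trans (A_le1 i).
by apply: ler_sum => k _; rewrite ler_piMr.
Qed.

Lemma substochastic_diag_mix (n : nat) (d : 'rV[R]_n) (A : 'M[R]_n) :
  (forall i, 0 <= d 0 i <= 1) -> substochastic A ->
  substochastic (diag_mx d *m A + (1%:M - diag_mx d)).
Proof.
move=> d01 [A_ge0 A_le1].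
have entryE i j : (diag_mx d *m A + (1%:M - diag_mx d)) i j
    = d 0 i * A i j + (if j == i then 1 - d 0 i else 0).
  by rewrite mul_diag_mx !mxE eq_sym; case: (j == i); rewrite ?subr0.
have d_ge0 i : 0 <= d 0 i by case/andP: (d01 i).
split=> [i j|i].
  rewrite entryE addr_ge0 ?mulr_ge0 //.
  by case: ifP => _; rewrite // subr_ge0; case/andP: (d01 i).
under eq_bigr => j _ do rewrite entryE.
rewrite big_split /= -big_distrr -big_mkcond big_pred1_eq /=.
by rewrite -lerBrDr opprB addrC subrK -[leRHS]mulr1 ler_wpM2l.
Qed.

End Substochastic.

Lemma row_stochastic_substochastic (R : realFieldType) (n : nat) (A : 'M[R]_n) :
  row_stochastic A -> substochastic A.
Proof. by case=> A_ge0 A_sum1; split=> // i; rewrite A_sum1. Qed.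

Lemma substochastic_row_substochastic (R : realFieldType) (n : nat) (A : 'M[R]_n) :
  substochastic A -> row_substochastic A.
Proof.
case=> A_ge0 A_le1; split=> // i j; rewrite A_ge0 /=.
apply: le_trans (A_le1 i); rewrite (bigD1 j) //= lerDl.
by rewrite sumr_ge0 // => k _.
Qed.

Section Sigma.

Variables (R : realFieldType) (n : nat) (W : nat -> 'M[R]_n) (lam : nat -> 'I_n -> R).
Hypothesis hW : forall t, row_stochastic (W t).
Hypothesis hlam : forall t i, 0 <= lam t i <= 1.

Lemma Sigma0 : Sigma W lam 0 = 0.
Proof. by rewrite /Sigma big_geq. Qed.

Lemma SigmaS t :
  Sigma W lam t.+1 = Lam lam t *m W t *m Sigma W lam t + (1%:M - Lam lam t).
Proof.
rewrite /Sigma big_nat_recr //= ltnn mul1mx mulmx_sumr; congr (_ + _).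
by apply: eq_big_nat => tau /andP[_ tau_lt_t]; rewrite tau_lt_t mulmxA.
Qed.

Lemma substochastic_Sigma t : substochastic (Sigma W lam t).
Proof.
elim: t => [|t IHt]; first by rewrite Sigma0; apply: substochastic0.
rewrite SigmaS -mulmxA; apply: substochastic_diag_mix => [i|]; first by rewrite mxE.
by apply: substochastic_mul => //; apply: row_stochastic_substochastic.
Qed.

End Sigma.

Theorem lemma4 (R : realFieldType) (n : nat) (W : nat -> 'M[R]_n)
  (lam : nat -> 'I_n -> R)
  (hW : forall t, row_stochastic (W t))
  (hlam : forall t i, 0 <= lam t i <= 1)
  (t : nat) (ht : (1 <= t)%N) :
  row_substochastic (Sigma W lam t).
Proof. exact/substochastic_row_substochastic/substochastic_Sigma. Qed.
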